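(* Let $t$ be a positive integer and let $G$ be a graph on $4t-1$ vertices with $\alpha(G)=2$ and $\mathrm{cm}(G)\le t-1$. Let $S_0,S_1,S_2$ be pairwise disjoint subsets of $V(G)$ (some possibly empty), each inducing a clique in $G$, such that $S_0$ is complete to $S_1\cup S_2$ and $S_1$ is anti-complete to $S_2$. Then $|S_0|+|S_1|+|S_2|\le t-1$.
   Context: All graphs are finite and simple. $\alpha(G)$ is the independence number. A matching $M$ in $G$ is connected if for every two edges of $M$ there is an edge of $G$ joining an endpoint of one to an endpoint of the other; $\mathrm{cm}(G)$ is the maximum size of a connected matching in $G$. For disjoint vertex sets $A,B$: $A$ is complete to $B$ if every vertex of $A$ is adjacent to every vertex of $B$; $A$ is anti-complete to $B$ if there is no edge between them. *)

From mathcomp Require Import all_boot.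
Set Implicit Arguments. Unset Strict Implicit. Unset Printing Implicit Defensive.

Definition simple_graph (T : finType) (e : rel T) : Prop :=
  symmetric e /\ irreflexive e.

Definition independent (T : finType) (e : rel T) (A : {set T}) : bool :=
  [forall x in A, forall y in A, ~~ e x y].

Definition alpha (T : finType) (e : rel T) : nat :=
  \max_(A : {set T} | independent e A) #|A|.

Definition is_clique (T : finType) (e : rel T) (A : {set T}) : bool :=
  [forall x in A, forall y in A, (x != y) ==> e x y].

Definition complete_to (T : finType) (e : rel T) (A B : {set T}) : bool :=
  [forall x in A, forall y in B, e x y].

Definition anticomplete_to (T : finType) (e : rel T) (A B : {set T}) : bool :=
  [forall x in A, forall y in B, ~~ e x y].

Definition is_matching (T : finType) (e : rel T) (M : {set T * T}) : bool :=
  [forall p in M, e p.1 p.2] &&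
  [forall p in M, forall q in M, (p != q) ==>
     [&& p.1 != q.1, p.1 != q.2, p.2 != q.1 & p.2 != q.2]].

Definition is_connected_matching (T : finType) (e : rel T) (M : {set T * T}) : bool :=
  is_matching e M &&
  [forall p in M, forall q in M, (p != q) ==>
     [|| e p.1 q.1, e p.1 q.2, e p.2 q.1 | e p.2 q.2]].

Definition cm (T : finType) (e : rel T) : nat :=
  \max_(M : {set T * T} | is_connected_matching e M) #|M|.

From mathcomp Require Import all_boot zify.
Set Implicit Arguments. Unset Strict Implicit. Unset Printing Implicit Defensive.

(* Since alpha(G) = 2, the non-neighbourhood of any vertex is a clique.  A
   clique on t vertices would yield a connected matching of size t: either it
   matches greedily into the rest of the graph, or one of its vertices has 2t
   non-neighbours outside it, a clique that matches into itself.  So cliques and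
   non-neighbourhoods have fewer than t vertices.  Shrink S0, S1, S2 to total
   size exactly t; the remaining set R has at least 3t - 1 vertices, each
   complete to S1 or to S2.  If Q2, the part of R complete to S2, satisfies
   |S1| + t <= |Q2| + |S2| + 1, then S1 matches greedily into Q2 and S0 u S2
   into R, a connected matching of size t; symmetrically for Q1.  So Q1 and Q2
   are both too small to cover R. *)

Lemma subset_of_card (T : finType) (A : {set T}) k :
  k <= #|A| -> exists2 B : {set T}, B \subset A & #|B| = k.
Proof.
elim: k => [|k IHk] leA; first by exists set0; rewrite ?sub0set ?cards0.
have [B BA cardB] := IHk (ltnW leA).
have /subsetPn[x xA xNB] : ~~ (A \subset B).
  by apply: contraTN leA => /subset_leq_card; rewrite cardB -ltnNge.
by exists (x |: B); rewrite ?subUset ?sub1set ?xA ?BA // cardsU1 xNB cardB.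
Qed.

Lemma card_disjointU (T : finType) (A B : {set T}) :
  [disjoint A & B] -> #|A :|: B| = #|A| + #|B|.
Proof. by move=> dAB; rewrite cardsU disjoint_setI0 // cards0 subn0. Qed.

Section DistinctRepresentatives.

Variables (T : finType) (D : T -> {set T}).

Lemma greedy_extend (A B : {set T}) (f0 : T -> T) :
  [disjoint A & B] ->
  {in B, forall x, f0 x \in D x} -> {in B &, injective f0} ->
  {in A, forall x, #|A| + #|B| <= #|D x|} ->
  exists2 f : T -> T,
    {in A :|: B, forall x, f x \in D x} & {in A :|: B &, injective f}.
Proof.
have [n] := ubnP #|A|; elim: n A B f0 => // n IHn A B f0 /ltnSE-cardA dAB Df0 inj0 bigD.
have [->|[x xA]] := set_0Vmem A; first by exists f0; rewrite set0U.
have /subsetPn[y yDx yNf0B] : ~~ (D x \subset f0 @: B).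
  apply: contraTN (bigD x xA) => /subset_leq_card/leq_trans/(_ (leq_imset_card _ _)).
  by rewrite (cardsD1 x A) xA; lia.
have xNB : x \notin B by rewrite (disjointFr dAB xA).
pose f1 z := if z == x then y else f0 z.
have f1B : {in B, f1 =1 f0} by move=> z zB; rewrite /f1 ifN //; apply: contraNneq xNB => <-.
have [|||||f Df injf] := IHn (A :\ x) (x |: B) f1.
- by rewrite (cardsD1 x A) xA in cardA.
- rewrite disjoints_subset; apply/subsetP => z /setD1P[zx zA].
  by rewrite !inE negb_or zx (disjointFr dAB zA).
- by move=> z /setU1P[->|zB]; [rewrite /f1 eqxx | rewrite f1B ?Df0].
- have f1_new z : z \in B -> f1 z != y.
    by move=> zB; rewrite f1B //; apply: contraNneq yNf0B => <-; rewrite imset_f.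
  move=> z1 z2 /setU1P[->|z1B] /setU1P[->|z2B] //.
  + by rewrite {1}/f1 eqxx => /esym/eqP; rewrite (negbTE (f1_new _ z2B)).
  + by rewrite {2}/f1 eqxx => /eqP; rewrite (negbTE (f1_new _ z1B)).
  + by rewrite !f1B //; apply: inj0.
- move=> z /setD1P[_ zA]; have := bigD z zA.
  by rewrite (cardsD1 x A) xA cardsU1 xNB; lia.
suff -> : A :|: B = A :\ x :|: (x |: B) by exists f.
by rewrite setUCA setUA setD1K.
Qed.

Lemma greedy_sdr (A : {set T}) :
  {in A, forall x, #|A| <= #|D x|} ->
  exists2 f : T -> T, {in A, forall x, f x \in D x} & {in A &, injective f}.
Proof.
move=> bigD; have [||||f] := @greedy_extend A set0 id.
- by rewrite disjoints_subset setC0 subsetT.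
- by move=> x; rewrite inE.
- by move=> x; rewrite inE.
- by move=> x /bigD; rewrite cards0 addn0.
by rewrite setU0; exists f.
Qed.

End DistinctRepresentatives.

Section Graph.

Variables (T : finType) (e : rel T).

Definition nbhd (v : T) : {set T} := [set u | e v u].

Definition non_nbhd (v : T) : {set T} := [set u | (u != v) && ~~ e v u].

Definition complete_part (R B : {set T}) : {set T} := [set r in R | B \subset nbhd r].

Lemma complete_part_subset (R B : {set T}) : complete_part R B \subset R.
Proof. by apply/subsetP => r /setIdP[]. Qed.

Lemma is_cliqueP (K : {set T}) :
  reflect {in K &, forall x y, x != y -> e x y} (is_clique e K).
Proof.
apply: (iffP forall_inP) => [cK x y xK yK | cK x xK].
  exact: implyP (forall_inP (cK x xK) y yK).
by apply/forall_inP => y yK; apply/implyP; apply: cK.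
Qed.

Lemma is_cliqueS (K L : {set T}) : K \subset L -> is_clique e L -> is_clique e K.
Proof.
move=> /subsetP KL /is_cliqueP cL; apply/is_cliqueP => x y /KL xL /KL yL.
exact: cL.
Qed.

Lemma complete_toP (A B : {set T}) :
  reflect {in A & B, forall x y, e x y} (complete_to e A B).
Proof.
apply: (iffP forall_inP) => [cAB x y xA yB | cAB x xA].
  exact: forall_inP (cAB x xA) y yB.
by apply/forall_inP => y yB; apply: cAB.
Qed.

Lemma anticomplete_toP (A B : {set T}) :
  reflect {in A & B, forall x y, ~~ e x y} (anticomplete_to e A B).
Proof.
apply: (iffP forall_inP) => [aAB x y xA yB | aAB x xA].
  exact: forall_inP (aAB x xA) y yB.
by apply/forall_inP => y yB; apply: aAB.
Qed.

Lemma card_le_alpha (A : {set T}) : independent e A -> #|A| <= alpha e.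
Proof. exact: (@leq_bigmax_cond _ (independent e) (fun A => #|A|)). Qed.

Lemma card_le_cm (M : {set T * T}) : is_connected_matching e M -> #|M| <= cm e.
Proof. exact: (@leq_bigmax_cond _ (is_connected_matching e) (fun M => #|M|)). Qed.

Lemma leq_cm_partners (A : {set T}) (f : T -> T) :
  {in A, forall x, f x \in ~: A :&: nbhd x} -> {in A &, injective f} ->
  {in A &, forall x y, x != y -> [|| e x y, e x (f y), e (f x) y | e (f x) (f y)]} ->
  #|A| <= cm e.
Proof.
move=> Af injf linked; pose M := [set (x, f x) | x in A].
have -> : #|A| = #|M| by rewrite card_in_imset // => x y _ _ [].
apply: card_le_cm.
have fNA x : x \in A -> f x \notin A by move=> /Af; rewrite !inE => /andP[].
have neqM x y : (x, f x) != (y, f y) -> x != y by apply: contraNneq => ->.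
apply/andP; split; first (apply/andP; split).
- by apply/forall_inP => _ /imsetP[x /Af + ->]; rewrite !inE => /andP[].
- apply/forall_inP => _ /imsetP[x xA ->]; apply/forall_inP => _ /imsetP[y yA ->].
  apply/implyP => /neqM xy /=; rewrite xy.
  have -> : x != f y by apply: contraNneq (fNA y yA) => <-.
  have -> : f x != y by apply: contraNneq (fNA x xA) => ->.
  by apply: contra xy => /eqP/injf->.
- apply/forall_inP => _ /imsetP[x xA ->]; apply/forall_inP => _ /imsetP[y yA ->].
  by apply/implyP => /neqM; apply: linked.
Qed.

Lemma clique_matching_out (A : {set T}) :
  is_clique e A -> {in A, forall x, #|A| <= #|~: A :&: nbhd x|} -> #|A| <= cm e.
Proof.
move=> /is_cliqueP cA bigN; have [f Nf injf] := greedy_sdr bigN.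
by apply: leq_cm_partners injf _ => // x y xA yA xy; rewrite cA.
Qed.

Lemma clique_half_le_cm (K : {set T}) k : is_clique e K -> 2 * k <= #|K| -> k <= cm e.
Proof.
move=> cK bigK; have [|A AK cardA] := @subset_of_card _ K k; first by lia.
rewrite -cardA; apply: clique_matching_out (is_cliqueS AK cK) _ => x xA.
have outN : K :\: A \subset ~: A :&: nbhd x.
  apply/subsetP => y /setDP[yK yNA].
  rewrite !inE yNA (is_cliqueP _ cK x y) ?(subsetP AK x xA) //.
  by apply: contraNneq yNA => <-.
by have := subset_leq_card outN; rewrite cardsD (setIidPr AK); lia.
Qed.

Hypotheses (e_sym : symmetric e) (e_irr : irreflexive e).

Lemma non_nbhd_clique v : alpha e <= 2 -> is_clique e (non_nbhd v).
Proof.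
move=> alpha_le2; apply/is_cliqueP => x y; rewrite !inE => /andP[xv vx] /andP[yv vy] xy.
apply: contraTT alpha_le2 => nxy; rewrite -ltnNge.
have indep : independent e [set v; x; y].
  apply/forall_inP => a; rewrite !inE -orbA => /or3P[]/eqP->;
  by apply/forall_inP => b; rewrite !inE -orbA => /or3P[]/eqP->; rewrite ?e_irr // e_sym.
have card3 : #|[set v; x; y]| = 3.
  by rewrite -setUA cardsU1 cards2 !inE negb_or ![v == _]eq_sym xv yv xy.
by rewrite -card3 card_le_alpha.
Qed.

Record clique_triple (S0 S1 S2 : {set T}) : Prop := CliqueTriple {
  disjoint01 : [disjoint S0 & S1];
  disjoint02 : [disjoint S0 & S2];
  disjoint12 : [disjoint S1 & S2];
  clique0 : is_clique e S0;
  clique1 : is_clique e S1;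
  clique2 : is_clique e S2;
  complete0 : complete_to e S0 (S1 :|: S2);
  anticomplete12 : anticomplete_to e S1 S2 }.

Lemma clique_tripleS (S0 S1 S2 A0 A1 A2 : {set T}) :
  A0 \subset S0 -> A1 \subset S1 -> A2 \subset S2 ->
  clique_triple S0 S1 S2 -> clique_triple A0 A1 A2.
Proof.
move=> sub0 sub1 sub2 [d01 d02 d12 c0 c1 c2 /complete_toP k0 /anticomplete_toP a12].
have sub12 : A1 :|: A2 \subset S1 :|: S2 by rewrite setUSS.
split; do ?[exact: disjointW d01 | exact: disjointW d02 | exact: disjointW d12
           | exact: is_cliqueS c0 | exact: is_cliqueS c1 | exact: is_cliqueS c2].
  by apply/complete_toP => x y /(subsetP sub0) xS0 /(subsetP sub12); apply: k0.
by apply/anticomplete_toP => x y /(subsetP sub1) xS1 /(subsetP sub2); apply: a12.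
Qed.

Lemma clique_triple_swap (S0 S1 S2 : {set T}) :
  clique_triple S0 S1 S2 -> clique_triple S0 S2 S1.
Proof.
case=> d01 d02 d12 c0 c1 c2 k0 /anticomplete_toP a12; split; rewrite 1?setUC //.
  by rewrite disjoint_sym.
by apply/anticomplete_toP => x y xS2 yS1; rewrite e_sym a12.
Qed.

Lemma card_clique_triple (S0 S1 S2 : {set T}) :
  clique_triple S0 S1 S2 -> #|S0 :|: S1 :|: S2| = #|S0| + #|S1| + #|S2|.
Proof.
case=> d01 d02 d12 _ _ _ _ _.
rewrite !card_disjointU // disjoints_subset subUset -!disjoints_subset.
by rewrite d02 d12.
Qed.

Lemma clique_triple_shrink (S0 S1 S2 : {set T}) k :
  clique_triple S0 S1 S2 -> k <= #|S0| + #|S1| + #|S2| ->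
  exists A0 A1 A2, clique_triple A0 A1 A2 /\ #|A0| + #|A1| + #|A2| = k.
Proof.
move=> triS; rewrite -card_clique_triple // => /subset_of_card[B BS cardB].
have triA : clique_triple (S0 :&: B) (S1 :&: B) (S2 :&: B).
  by apply: clique_tripleS triS; apply: subsetIl.
exists (S0 :&: B), (S1 :&: B), (S2 :&: B); split => //.
by rewrite -card_clique_triple // -!setIUl (setIidPr BS).
Qed.

Lemma clique_triple_matching (S0 S1 S2 : {set T}) (f : T -> T) :
  clique_triple S0 S1 S2 ->
  {in S0 :|: S1 :|: S2, forall x, f x \in ~: (S0 :|: S1 :|: S2) :&: nbhd x} ->
  {in S0 :|: S1 :|: S2 &, injective f} ->
  {in S1 & S2, forall u b, e (f u) b} ->
  #|S0 :|: S1 :|: S2| <= cm e.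
Proof.
case=> _ _ _ /is_cliqueP c0 /is_cliqueP c1 /is_cliqueP c2 /complete_toP k0 _ Nf injf f12.
apply: leq_cm_partners Nf injf _ => x y; rewrite !inE -!orbA.
have k01 u w : u \in S0 -> w \in S1 -> e u w by move=> uS0 wS1; rewrite k0 // inE wS1.
have k02 u w : u \in S0 -> w \in S2 -> e u w by move=> uS0 wS2; rewrite k0 // inE wS2 orbT.
move=> /or3P[xS|xS|xS] /or3P[yS|yS|yS] xy.
- by rewrite c0.
- by rewrite k01.
- by rewrite k02.
- by rewrite e_sym k01.
- by rewrite c1.
- by rewrite f12 ?orbT.
- by rewrite e_sym k02.
- by rewrite (e_sym x (f y)) f12 ?orbT.
- by rewrite c2.
Qed.

End Graph.

Section Extremal.

Variables (T : finType) (e : rel T) (t : nat).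
Hypotheses (e_sym : symmetric e) (e_irr : irreflexive e).
Hypotheses (alpha_le2 : alpha e <= 2) (card_T : 4 * t <= #|T|.+1) (cm_lt : cm e < t).

Lemma clique_card_lt (K : {set T}) : is_clique e K -> #|K| < t.
Proof.
move=> cK; rewrite ltnNge; apply: contraTN cm_lt => /subset_of_card[A AK cardA].
rewrite -leqNgt; have cA := is_cliqueS AK cK.
have [/forall_inP bigN | /forall_inPn[x xA]] :=
  boolP [forall x in A, t <= #|~: A :&: nbhd e x|].
  by rewrite -cardA clique_matching_out // cardA.
rewrite -ltnNge => smallN.
apply: (@clique_half_le_cm _ _ (~: A :\: nbhd e x)).
  apply: is_cliqueS (non_nbhd_clique e_sym e_irr x alpha_le2).
  apply/subsetP => y; rewrite !inE => /andP[nxy yNA]; rewrite nxy andbT.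
  by apply: contraNneq yNA => ->.
by have := cardsC A; have := cardsID (nbhd e x) (~: A); lia.
Qed.

Lemma non_nbhd_card_lt (v : T) : #|non_nbhd e v| < t.
Proof. exact/clique_card_lt/non_nbhd_clique. Qed.

Section Triple.

Variables (A0 A1 A2 : {set T}).
Hypotheses (triA : clique_triple e A0 A1 A2) (cardA : #|A0| + #|A1| + #|A2| = t).

Local Notation S := (A0 :|: A1 :|: A2).

Lemma card_outside : 3 * t <= #|~: S|.+1.
Proof. by have := cardsC S; rewrite (card_clique_triple triA) cardA; lia. Qed.

Lemma outside_covered : ~: S \subset complete_part e (~: S) A1 :|: complete_part e (~: S) A2.
Proof.
case: triA => _ _ d12 _ _ _ _ /anticomplete_toP a12.
apply/subsetP => r rNS; apply/setUP.
have [|/subsetPn[a aA1 nra]] := boolP (A1 \subset nbhd e r); [left|right]; apply/setIdP => //.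
split=> //; apply/subsetP => b bA2; rewrite inE in nra *.
apply: contraTT (a12 a b aA1 bA2); rewrite inE negbK => nrb.
have rNA x : x \in S -> x != r by move=> xS; apply: contraTneq xS => ->; rewrite -in_setC.
have /is_cliqueP := non_nbhd_clique e_sym e_irr r alpha_le2; apply.
- by rewrite inE nra rNA // !inE aA1 orbT.
- by rewrite inE nrb rNA // !inE bA2 orbT.
- by apply: contraTneq bA2 => <-; rewrite (disjointFr d12 aA1).
Qed.

Lemma outside_nbhd_card v : v \in S -> 2 * t <= #|~: S :&: nbhd e v|.
Proof.
move=> vS; have sub : ~: S :\: nbhd e v \subset non_nbhd e v.
  apply/subsetP => u /setDP[uNS nvu]; rewrite inE in nvu; rewrite inE nvu andbT.
  by apply: contraTneq uNS => ->; rewrite in_setC vS.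
have := subset_leq_card sub; have := cardsID (nbhd e v) (~: S).
by have := card_outside; have := non_nbhd_card_lt v; lia.
Qed.

Lemma complete_part_non_nbhd_card a :
  a \in A1 -> #|complete_part e (~: S) A2 :\: nbhd e a| + #|A2| < t.
Proof.
case: triA => _ _ d12 _ _ _ _ /anticomplete_toP a12 aA1.
set Q := complete_part e (~: S) A2.
have QS : Q \subset ~: S := complete_part_subset _ _ _.
have sub : (Q :\: nbhd e a) :|: A2 \subset non_nbhd e a.
  apply/subsetP => u /setUP[/setDP[uQ nau]|uA2]; rewrite inE.
    rewrite inE in nau; rewrite nau andbT.
    by apply: contraTneq (subsetP QS u uQ) => ->; rewrite in_setC negbK !inE aA1 orbT.
  rewrite a12 // andbT.
  by apply: contraTneq uA2 => ->; rewrite (disjointFr d12 aA1).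
have dj : [disjoint Q :\: nbhd e a & A2].
  rewrite disjoints_subset; apply/subsetP => u /setDP[/(subsetP QS)].
  by rewrite !inE negb_or => /andP[].
rewrite -card_disjointU //; apply: leq_ltn_trans (subset_leq_card sub) _.
exact: non_nbhd_card_lt.
Qed.

Lemma complete_part_card_lt : #|complete_part e (~: S) A2| + #|A2| + 1 < #|A1| + t.
Proof.
set Q := complete_part e (~: S) A2.
rewrite ltnNge; apply: contraTN cm_lt => bigQ; rewrite -leqNgt.
have [d01 d02 d12 _ _ _ _ _] := triA.
have bigQN a : a \in A1 -> #|A1| <= #|Q :&: nbhd e a|.
  move=> aA1; have := complete_part_non_nbhd_card aA1; rewrite -/Q.
  by have := cardsID (nbhd e a) Q; lia.
have [f1 Qf1 inj1] := @greedy_sdr _ (fun a => Q :&: nbhd e a) A1 bigQN.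
(* Partners of A1 are taken in Q, hence adjacent to all of A2. *)
pose D x := if x \in A1 then Q :&: nbhd e x else ~: S :&: nbhd e x.
have QS : Q \subset ~: S := complete_part_subset _ _ _.
have DS x : D x \subset ~: S :&: nbhd e x by rewrite /D; case: ifP => // _; apply: setSI.
have [||||f Df injf] := @greedy_extend _ D (A0 :|: A2) A1 f1.
- by rewrite disjoints_subset subUset -!disjoints_subset d01 disjoint_sym.
- by move=> x xA1; rewrite /D xA1 Qf1.
- exact: inj1.
- move=> v vA02; rewrite /D ifF; last first.
    by case/setUP: vA02 => [/(disjointFr d01)|/(disjointFl d12)].
  rewrite card_disjointU //; apply: leq_trans (outside_nbhd_card _); first by lia.
  by rewrite setUAC in_setU vA02.
rewrite setUAC in Df injf; rewrite -cardA -(card_clique_triple triA).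
apply: (clique_triple_matching (f := f) e_sym triA _ injf) => [x xS|u b uA1 bA2].
  exact: subsetP (DS x) _ (Df x xS).
have /Df : u \in S by rewrite !inE uA1 orbT.
rewrite /D uA1 => /setIP[/setIdP[_ /subsetP A2N] _].
by have := A2N b bA2; rewrite inE.
Qed.

End Triple.

Lemma clique_triple_card_lt (S0 S1 S2 : {set T}) :
  clique_triple e S0 S1 S2 -> #|S0| + #|S1| + #|S2| < t.
Proof.
move=> triS; rewrite ltnNge; apply/negP.
case/(clique_triple_shrink triS) => [A0 [A1 [A2 [triA cardA]]]].
have cardA' : #|A0| + #|A2| + #|A1| = t by lia.
have := complete_part_card_lt triA cardA.
have := complete_part_card_lt (clique_triple_swap e_sym triA) cardA'.
rewrite (setUAC A0 A2).
have := subset_leq_card (outside_covered triA); rewrite cardsU.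
by have := card_outside triA cardA; lia.
Qed.

End Extremal.

Theorem theorem1p5 (t : nat) (T : finType) (e : rel T)
    (S0 S1 S2 : {set T}) :
  0 < t ->
  simple_graph e ->
  #|T| = 4 * t - 1 ->
  alpha e = 2 ->
  cm e <= t - 1 ->
  [disjoint S0 & S1] -> [disjoint S0 & S2] -> [disjoint S1 & S2] ->
  is_clique e S0 -> is_clique e S1 -> is_clique e S2 ->
  complete_to e S0 (S1 :|: S2) ->
  anticomplete_to e S1 S2 ->
  #|S0| + #|S1| + #|S2| <= t - 1.
Proof.
move=> t_gt0 [e_sym e_irr] card_T alpha2 cm_le d01 d02 d12 c0 c1 c2 k0 a12.
have alpha_le2 : alpha e <= 2 by rewrite alpha2.
have card_T_ge : 4 * t <= #|T|.+1 by rewrite card_T; lia.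
have cm_lt : cm e < t by lia.
have triS : clique_triple e S0 S1 S2 by split.
by have := clique_triple_card_lt e_sym e_irr alpha_le2 card_T_ge cm_lt triS; lia.
Qed.
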